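(* Let $n\ge 3$ and let $D_{2n}=\langle a,b : a^n=b^2=e,\ bab=a^{-1}\rangle$ be the dihedral group of order $2n$. Let $H$ be a normal subgroup of $D_{2n}$. Then $\Gamma_{D_{2n},H}$ admits a perfect code if and only if either $H=D_{2n}$, or one of the following holds: (1) $n$ is odd and $H\le\langle a\rangle$; (2) $n$ is even and $H=\langle a^2,b\rangle$, or $H=\langle a^2,ab\rangle$, or $H=\langle a^t\rangle$ for a positive divisor $t$ of $n$ such that either $n/t$ is odd, or $n/t=2$, or $n/t\ge 4$ is even and $t$ is odd.
   Context: For a normal subgroup $H$ of a finite group $G$ with identity $e$, the subgroup sum graph $\Gamma_{G,H}$ is the simple undirected graph with vertex set $G$ in which distinct vertices $x,y$ are adjacent if and only if $xy\in H\setminus\{e\}$. A perfect code in a graph is a set $C$ of vertices that is independent and such that every vertex not in $C$ is adjacent to exactly one vertex of $C$. *)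

From mathcomp Require Import all_boot all_fingroup.
Set Implicit Arguments. Unset Strict Implicit. Unset Printing Implicit Defensive.
Import GroupScope.
Local Open Scope group_scope.

(* Subgroup sum graph Gamma_{G,H}: vertex set G; distinct x, y adjacent
   iff x * y \in H \ {e}. *)
Definition ssg_adj (gT : finGroupType) (H : {set gT}) (x y : gT) : bool :=
  (x != y) && (x * y \in H :\ 1).

Definition perfect_code (gT : finGroupType) (G H C : {set gT}) : bool :=
  [&& C \subset G,
      [forall x in C, forall y in C, ~~ ssg_adj H x y] &
      [forall x in G :\: C, #|[set y in C | ssg_adj H x y]| == 1%N]].

From mathcomp Require Import all_boot all_fingroup cyclic zify.
Set Implicit Arguments. Unset Strict Implicit. Unset Printing Implicit Defensive.

(* As H is normal, the neighbours of x are the elements of the coset x^-1 H other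
   than x and x^-1, so the graph is a union of pieces on pairs of cosets {xH, x^-1 H}.
   A perfect code exists iff |H| <= 2 or every coset xH with x^2 in H contains an
   element y with y^2 = 1: a self-inverse coset without one induces a cocktail-party
   graph on |H| >= 3 vertices paired by inversion, which has no perfect code;
   conversely, choosing in every coset the elements of least rank, with x and x^-1
   ranked alike and elements of order at most 2 ranked first, gives a perfect code.
   In D_2n every coset containing a reflection qualifies, so only rotation cosets
   of rotation subgroups H = <a^t> matter, and the condition becomes arithmetic
   in t and n/t. *)

Lemma card_gt2_other (T : finType) (A : {set T}) c d :
  (2 < #|A|)%N -> exists z, z \in A :\ c :\ d.
Proof.
move=> A_gt2; apply/set0Pn; rewrite -card_gt0.
by move: A_gt2; rewrite (cardsD1 c A) (cardsD1 d (A :\ c)); lia.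
Qed.

Lemma dvdn_add_half n t k :
  t %| n -> odd (n %/ t) -> ~~ odd n -> t %| k * 2 -> ~~ (t %| k) -> t %| k + n./2.
Proof.
move=> /dvdnP[d ->] odd_d even_n tk2 ntk.
have t_gt0 : 0 < t by case: t odd_d {even_n tk2 ntk} => //; rewrite muln0 divn0.
rewrite mulnK // in odd_d.
have [s tE] : exists s, t = s * 2.
  by exists t./2; rewrite muln2 even_halfK //; move: even_n; rewrite oddM odd_d.
have s_gt0 : 0 < s by lia.
rewrite {even_n t t_gt0}tE dvdn_pmul2r // in tk2 ntk *; case/dvdnP: tk2 ntk => j ->.
have dvdn_s2 m : (s * 2 %| m * s) = ~~ odd m by rewrite [s * 2]mulnC dvdn_pmul2r // dvdn2.
rewrite dvdn_s2 negbK => odd_j.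
by rewrite mulnA [X in X./2]muln2 doubleK -mulnDl dvdn_s2 oddD odd_j odd_d.
Qed.

Lemma half_add_not_dvdn n t k :
  0 < t -> ~~ odd t -> t * 2 %| n -> n %| k * 2 -> ~~ (t %| t./2 + k).
Proof.
move=> t_gt0 even_t t2n nk2; have tk : t %| k.
  by rewrite -(dvdn_pmul2r (isT : 0 < 2)) (dvdn_trans t2n).
by rewrite dvdn_addl //; apply/negP => /dvdn_leq; lia.
Qed.

Import GroupScope.
Local Open Scope group_scope.

Section PerfectCodeCriterion.
Variable gT : finGroupType.
Implicit Types (x y u v w z : gT) (A : {set gT}).

Definition involutive_cosets (G H : {set gT}) :=
  forall x, x \in G -> x ^+ 2 \in H ->
  exists2 y, y \in G & (x * y \in H) && (y ^+ 2 == 1).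

Lemma ssg_adjE A x y : ssg_adj A x y = [&& x != y, x * y != 1 & x * y \in A].
Proof. by rewrite /ssg_adj in_setD1. Qed.

Lemma mulg_eq1 x y : (x * y == 1) = (x == y^-1).
Proof. by rewrite (eq_mulgV1 x) invgK. Qed.

Definition inv_rank x : nat :=
  if x ^+ 2 == 1 then nat_of_ord (enum_rank x)
  else (#|gT| + minn (enum_rank x) (enum_rank x^-1))%N.

Lemma inv_rankV x : inv_rank x^-1 = inv_rank x.
Proof.
rewrite /inv_rank !expg2 -!eq_invg_mul !invgK eq_sym.
by case: eqP => [-> // | _]; rewrite minnC.
Qed.

Lemma inv_rank_small x : (inv_rank x < #|gT|)%N = (x ^+ 2 == 1).
Proof. by rewrite /inv_rank; case: ifP => _; rewrite ?ltn_ord // ltnNge leq_addr. Qed.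

Lemma inv_rank_inj x y : inv_rank x = inv_rank y -> y = x \/ y = x^-1.
Proof.
move=> eq_xy; have sq_xy := inv_rank_small x.
rewrite eq_xy inv_rank_small in sq_xy.
move: eq_xy; rewrite /inv_rank -sq_xy; case: eqP => _.
  by move/val_inj/enum_rank_inj=> ->; left.
move/addnI; rewrite /minn; do 2 case: ifP => _; move/val_inj/enum_rank_inj.
- by move=> ->; left.
- by move=> ->; rewrite invgK; right.
- by move=> <-; right.
- by move/invg_inj=> ->; left.
Qed.

Section NormalSubgroup.
Variables G H : {group gT}.
Hypothesis nsHG : H <| G.

Lemma normal_mulC u v : u \in G -> v \in G -> u * v \in H -> v * u \in H.
Proof.
move=> uG vG uvH; have nHu := subsetP (normal_norm nsHG) u uG.
by rewrite -(memJ_norm (u * v) nHu) conjgE -mulgA mulKg in uvH.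
Qed.

Lemma memG_of_mulH x y : x \in G -> x * y \in H -> y \in G.
Proof.
by move=> xG xyH; rewrite -(mulKg x y) groupM ?groupV // (subsetP (normal_sub nsHG)).
Qed.

Lemma memH_Vmul x u v : x * u \in H -> x * v \in H -> u^-1 * v \in H.
Proof.
by move=> xuH xvH; have := groupM (groupVr xuH) xvH; rewrite invMg -mulgA mulKg.
Qed.

Lemma sqr_coset_mul x u v :
  x \in G -> x ^+ 2 \in H -> x * u \in H -> x * v \in H -> u * v \in H.
Proof.
move=> xG x2H xuH xvH; have uxH := normal_mulC xG (memG_of_mulH xG xuH) xuH.
have := groupM (groupM uxH (groupVr x2H)) xvH.
by rewrite expg2 invMg !mulgA mulgK mulgVK.
Qed.

Lemma sqr_coset_mulV x u : x \in G -> x ^+ 2 \in H -> x * u \in H -> x * u^-1 \in H.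
Proof.
move=> xG x2H xuH; have uxH := normal_mulC xG (memG_of_mulH xG xuH) xuH.
by have := groupM x2H (groupVr uxH); rewrite expg2 invMg !mulgA mulgK.
Qed.

Section PerfectCode.
Variable C : {set gT}.
Hypothesis pcC : perfect_code G H C.

Lemma perfect_code_indep u v : u \in C -> v \in C -> ssg_adj H u v = false.
Proof.
case/and3P: pcC => _ /forall_inP indep _ uC vC.
by apply/negbTE; move/forall_inP: (indep u uC); apply.
Qed.

Lemma perfect_code_nbhd u :
  u \in G -> u \notin C -> exists w, [set y in C | ssg_adj H u y] = [set w].
Proof.
case/and3P: pcC => _ _ /forall_inP dom uG uC.
by apply/cards1P; apply: dom; rewrite inE uC.
Qed.

Lemma perfect_code_involutive_cosets : (2 < #|H|)%N -> involutive_cosets G H.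
Proof.
move=> H_gt2 x xG x2H; apply/exists_inP/contraT.
rewrite negb_exists_in => /forall_inP no_inv.
have [c cC xcH] : exists2 c, c \in C & x * c \in H.
  case: (boolP (x \in C)) => xC; first by exists x; rewrite // -expg2.
  have [w nbhd_x] := perfect_code_nbhd xG xC.
  have : w \in [set y in C | ssg_adj H x y] by rewrite nbhd_x set11.
  by rewrite inE ssg_adjE => /and4P[wC _ _ xwH]; exists w.
have cG := memG_of_mulH xG xcH.
have xciH := sqr_coset_mulV xG x2H xcH.
have ci_neq_c : c^-1 != c by have := no_inv c cG; rewrite xcH expg2 -eq_invg_mul.
have [z] : exists z, z \in x^-1 *: H :\ c :\ c^-1.
  by apply: card_gt2_other; rewrite card_lcoset.
rewrite !inE mem_lcoset invgK => /and3P[z_neq_ci z_neq_c xzH].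
have zG := memG_of_mulH xG xzH.
have adj_zc : ssg_adj H z c.
  by rewrite ssg_adjE z_neq_c mulg_eq1 z_neq_ci (sqr_coset_mul xG x2H xzH xcH).
have adj_zci : ssg_adj H z c^-1.
  by rewrite ssg_adjE z_neq_ci mulg_eq1 invgK z_neq_c (sqr_coset_mul xG x2H xzH xciH).
have zC : z \notin C by apply/negP => zC; rewrite (perfect_code_indep zC cC) in adj_zc.
case: (boolP (c^-1 \in C)) => ciC.
  have [w nbhd_z] := perfect_code_nbhd zG zC.
  have : c \in [set w] by rewrite -nbhd_z inE cC adj_zc.
  have : c^-1 \in [set w] by rewrite -nbhd_z inE ciC adj_zci.
  by rewrite !inE => /eqP ciw /eqP cw; rewrite ciw cw eqxx in ci_neq_c.
have [w nbhd_ci] := perfect_code_nbhd (groupVr cG) ciC.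
have : w \in [set y in C | ssg_adj H c^-1 y] by rewrite nbhd_ci set11.
rewrite inE ssg_adjE => /and4P[wC ci_neq_w ciw_neq1 ciwH].
have xwH : x * w \in H by have := groupM xcH ciwH; rewrite mulgA mulgK.
have w_neq_c : w != c by apply: contraNneq ciw_neq1 => ->; rewrite mulVg.
have w_neq_ci : w != c^-1 by apply: contraNneq ciC => <-.
have := perfect_code_indep wC cC.
by rewrite ssg_adjE w_neq_c mulg_eq1 w_neq_ci (sqr_coset_mul xG x2H xwH xcH).
Qed.

End PerfectCode.

(* The elements of least rank in their coset of H: at most a pair {u, u^-1} per
   coset, and closed under inversion because uH = Hu. *)
Definition coset_min :=
  [set u in G | [forall w in u *: H, inv_rank u <= inv_rank w]].

Lemma coset_minP u :
  reflect (u \in G /\ forall w, u^-1 * w \in H -> (inv_rank u <= inv_rank w)%N)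
          (u \in coset_min).
Proof.
rewrite inE; apply: (iffP andP) => -[uG min_u]; split=> //.
  by move=> w; rewrite -mem_lcoset; apply: (forall_inP min_u).
by apply/forall_inP => w; rewrite mem_lcoset; apply: min_u.
Qed.

Lemma coset_minV u : u \in coset_min -> u^-1 \in coset_min.
Proof.
case/coset_minP=> uG min_u; apply/coset_minP; split; first by rewrite groupV.
move=> w; rewrite invgK inv_rankV -(inv_rankV w) => uwH; apply: min_u.
by rewrite -invMg groupV normal_mulC // (memG_of_mulH uG).
Qed.

Lemma coset_min_eq u v :
  u \in coset_min -> v \in coset_min -> u^-1 * v \in H -> v = u \/ v = u^-1.
Proof.
move=> /coset_minP[_ min_u] /coset_minP[_ min_v] uvH; apply: inv_rank_inj.
by apply/eqP; rewrite eqn_leq min_u // min_v // -[u]invgK -invMg groupV.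
Qed.

Lemma coset_min_indep u v : u \in coset_min -> v \in coset_min -> ~~ ssg_adj H u v.
Proof.
move=> uC vC; rewrite ssg_adjE mulg_eq1; apply/and3P => -[u_neq_v u_neq_vi uvH].
have [] := coset_min_eq (coset_minV uC) vC; rewrite ?invgK // => vE.
  by rewrite vE invgK eqxx in u_neq_vi.
by rewrite vE eqxx in u_neq_v.
Qed.

Lemma coset_min_exists z : z \in G -> exists2 m, m \in coset_min & z * m \in H.
Proof.
move=> zG; have zziH : z * z^-1 \in H by rewrite mulgV.
case: (@arg_minnP _ _ (fun w => z * w \in H) inv_rank zziH) => m zmH min_m.
exists m => //; apply/coset_minP; split; first exact: memG_of_mulH zG zmH.
move=> w mwH; apply: min_m.
by have := groupM zmH mwH; rewrite mulgA mulgK.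
Qed.

Lemma coset_min_pair z m :
    (#|H| <= 2)%N \/ involutive_cosets G H -> z \in G -> z^-1 \notin coset_min ->
  m \in coset_min -> z * m \in H -> z * m^-1 \in H -> m^-1 = m.
Proof.
move=> [H_le2 | inv_cosets] zG ziC mC zmH zmiH; apply/eqP.
  apply: contraTT H_le2 => mi_neq_m; rewrite -ltnNge -(card_lcoset H z^-1).
  apply/card_gt2P; exists z^-1, m, m^-1.
  rewrite !mem_lcoset invgK mulgV group1 zmH zmiH [m == _]eq_sym mi_neq_m.
  split; split=> //; first by apply: contraNneq ziC => ->.
  by apply: contraNneq ziC => <-; apply: coset_minV.
have mG := memG_of_mulH zG zmH.
have z2H : z ^+ 2 \in H.
  have := groupM zmiH (normal_mulC zG mG zmH).
  by rewrite -mulgA (mulgA m^-1) mulVg mul1g expg2.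
(* The coset of m contains an element of order at most 2, which ranks below m
   unless m itself has order at most 2. *)
have [y _ /andP[zyH y2]] := inv_cosets z zG z2H.
case/coset_minP: mC => _ /(_ y (memH_Vmul zmH zyH)) le_my.
by rewrite eq_invg_mul -expg2 -inv_rank_small (leq_ltn_trans le_my) ?inv_rank_small.
Qed.

Lemma coset_min_dominates z :
    (#|H| <= 2)%N \/ involutive_cosets G H -> z \in G :\: coset_min ->
  #|[set y in coset_min | ssg_adj H z y]| == 1%N.
Proof.
move=> crit; rewrite inE => /andP[zC zG].
have ziC : z^-1 \notin coset_min by apply: contra zC => /coset_minV; rewrite invgK.
have [m mC zmH] := coset_min_exists zG.
apply/cards1P; exists m; apply/setP => y; rewrite in_set in_set1 ssg_adjE mulg_eq1.
apply/idP/eqP => [/and4P[yC _ _ zyH] | ->]; last first.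
  rewrite mC zmH andbT /=; apply/andP; split; first by apply: contraNneq zC => ->.
  by apply: contraNneq ziC => ->; rewrite invgK.
case: (coset_min_eq mC yC (memH_Vmul zmH zyH)) => // yE.
by rewrite yE (coset_min_pair crit zG ziC mC zmH) // -yE.
Qed.

Theorem perfect_code_normalP :
  (exists C, perfect_code G H C) <-> (#|H| <= 2)%N \/ involutive_cosets G H.
Proof.
split=> [[C pcC] | crit].
  case: (leqP #|H| 2) => [|H_gt2]; first by left.
  by right; apply: perfect_code_involutive_cosets pcC H_gt2.
exists coset_min; apply/and3P; split.
- by apply/subsetP => u /coset_minP[].
- by apply/forall_inP => u uC; apply/forall_inP => v vC; apply: coset_min_indep.
- by apply/forall_inP => z; apply: coset_min_dominates.
Qed.

End NormalSubgroup.

End PerfectCodeCriterion.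

Lemma mem_cycle_sqr (gT : finGroupType) (x : gT) : odd #[x] -> x \in <[x ^+ 2]>.
Proof.
move=> odd_x; have /eqP <- : generator <[x]> (x ^+ 2).
  by rewrite generator_coprime coprimen2.
exact: cycle_id.
Qed.

Lemma expg_double_half (gT : finGroupType) (x : gT) m :
  x ^+ m = (x ^+ 2) ^+ m./2 * x ^+ odd m.
Proof. by rewrite -expgM -expgD mul2n addnC odd_double_half. Qed.

Section Dihedral.
Variables (gT : finGroupType) (G : {group gT}) (a b : gT) (n : nat).
Hypotheses (n_ge3 : (3 <= n)%N) (defG : G :=: <<[set a; b]>>) (oa : #[a] = n)
  (ob : #[b] = 2%N) (bab : b * a * b = a^-1) (cardG : #|G| = (2 * n)%N).

Lemma a_in_G : a \in G.
Proof. by rewrite defG mem_gen // !inE eqxx. Qed.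

Lemma b_in_G : b \in G.
Proof. by rewrite defG mem_gen // !inE eqxx orbT. Qed.

Lemma invg_b : b^-1 = b.
Proof. by apply/eqP; rewrite eq_invg_mul -expg2 -ob expg_order. Qed.

Lemma conj_b_cycle g : g \in <[a]> -> b * g * b = g^-1.
Proof.
case/cycleP=> k ->; have := conjXg a b k.
by rewrite !conjgE invg_b !mulgA bab expVgn.
Qed.

Lemma mulg_b_cycle g : g \in <[a]> -> b * g = g^-1 * b.
Proof. by move=> ga; rewrite -(conj_b_cycle ga) -mulgA -expg2 -ob expg_order mulg1. Qed.

Lemma refl_sqr g : g \in <[a]> -> (g * b) ^+ 2 = 1.
Proof. by move=> ga; rewrite expg2 -mulgA (mulgA b) conj_b_cycle // mulgV. Qed.

Lemma mul_refl g h : h \in <[a]> -> (g * b) * (h * b) = g * h^-1.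
Proof. by move=> ha; rewrite mulgA -(mulgA g b) -mulgA conj_b_cycle. Qed.

Lemma b_notin_cycle : b \notin <[a]>.
Proof.
apply/negP => ba; have : G \subset <[a]>.
  by rewrite defG gen_subG; apply/subsetP => x; rewrite !inE => /orP[] /eqP ->; rewrite ?cycle_id.
by move/subset_leq_card; rewrite cardG -orderE oa; lia.
Qed.

Lemma dihedral_elem g : g \in G -> exists k, g = a ^+ k \/ g = a ^+ k * b.
Proof.
move=> gG; have TIab : <[a]> :&: <[b]> = 1.
  by rewrite setIC prime_TIg ?cycle_subG ?b_notin_cycle // -orderE ob.
have sMG : <[a]> * <[b]> \subset G by rewrite mul_subG // cycle_subG ?a_in_G ?b_in_G.
have /eqP defM : <[a]> * <[b]> == G.
  by rewrite eqEcard sMG (TI_cardMg TIab) -!orderE oa ob cardG mulnC leqnn.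
move: gG; rewrite -defM => /mulsgP[_ _ /cycleP[i ->] /cycleP[j ->] ->].
exists i; rewrite -(expg_mod_order b j) ob.
by case: (j %% 2) (ltn_pmod j (isT : 0 < 2)) => [|[|//]] _; [left; rewrite mulg1 | right].
Qed.

Lemma mem_cycle_aX m t : (t %| n)%N -> (a ^+ m \in <[a ^+ t]>) = (t %| m)%N.
Proof.
move=> tn; apply/idP/idP; last by case/dvdnP=> j ->; rewrite mulnC expgM mem_cycle.
case/cycleP=> j /eqP; rewrite -expgM eq_expg_mod_order oa => /eqP e.
by rewrite /dvdn -(modn_dvdm m tn) e (modn_dvdm _ tn) modnMr.
Qed.

Lemma card_cycle_aX t : (t %| n)%N -> #|<[a ^+ t]>| = (n %/ t)%N.
Proof. by move=> tn; rewrite -orderE orderXdiv oa. Qed.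

Lemma sub_cycle_aX (K : {group gT}) :
  K \subset <[a]> -> exists t, [/\ (0 < t)%N, (t %| n)%N, K :=: <[a ^+ t]> & (n %/ t)%N = #|K|].
Proof.
move=> sKa; have Kn : (#|K| %| n)%N by rewrite -oa orderE cardSg.
exists (n %/ #|K|)%N; have nE := divnK Kn.
have t_gt0 : (0 < n %/ #|K|)%N by rewrite divn_gt0 // dvdn_leq //; lia.
have dE : (n %/ (n %/ #|K|))%N = #|K| by rewrite -{1}nE mulKn.
split=> //; first by rewrite -{2}nE dvdn_mulr.
apply/eqP; rewrite (eq_subG_cyclic (cycle_cyclic a)) ?cycle_subG ?mem_cycle //.
by rewrite -orderE orderXdiv ?oa ?dE // -{2}nE dvdn_mulr.
Qed.

Variable H : {group gT}.
Hypothesis nsHG : H <| G.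

Lemma involutive_cosets_rot :
    (forall k, (a ^+ k) ^+ 2 \in H ->
       exists2 y, y \in G & (a ^+ k * y \in H) && (y ^+ 2 == 1)) ->
  involutive_cosets G H.
Proof.
move=> rot_ok x xG x2H; have [k [xE | xE]] := dihedral_elem xG.
  by rewrite xE in x2H *; apply: rot_ok.
by exists x; rewrite // -expg2 x2H xE refl_sqr ?mem_cycle ?eqxx.
Qed.

Lemma involutive_cosets_refl j : a ^+ j * b \in H -> involutive_cosets G H.
Proof.
move=> refl_H; apply: involutive_cosets_rot => k _.
exists ((a ^+ k)^-1 * (a ^+ j * b)).
  by rewrite groupM ?groupV ?groupX ?a_in_G // (subsetP (normal_sub nsHG)).
by rewrite mulKVg refl_H mulgA refl_sqr ?eqxx // groupM ?groupV ?mem_cycle.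
Qed.

Lemma involutive_cosets_odd : odd n -> involutive_cosets G H.
Proof.
move=> odd_n; apply: involutive_cosets_rot => k a2kH; exists 1; rewrite ?mulg1 ?expg1n //.
have odd_ak : odd #[a ^+ k] by rewrite (dvdn_odd (orderXdvd a k)) ?oa.
by rewrite eqxx andbT (subsetP _ _ (mem_cycle_sqr odd_ak)) // cycle_subG.
Qed.

Lemma involutive_cosets_cycle t :
    ~~ odd n -> (t %| n)%N -> H :=: <[a ^+ t]> -> odd (n %/ t) \/ odd t ->
  involutive_cosets G H.
Proof.
move=> even_n tn HE odd_dt; apply: involutive_cosets_rot => k.
rewrite -expgM HE mem_cycle_aX // => tk2.
have [tk | ntk] := boolP (t %| k)%N.
  by exists 1; rewrite ?mulg1 ?expg1n ?eqxx ?andbT ?mem_cycle_aX.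
case: odd_dt => [odd_d | odd_t]; last by rewrite Gauss_dvdl ?coprimen2 // (negbTE ntk) in tk2.
exists (a ^+ n./2); first by rewrite groupX ?a_in_G.
rewrite -expgD mem_cycle_aX // (dvdn_add_half tn odd_d even_n tk2 ntk) /=.
by rewrite -expgM muln2 even_halfK // -oa expg_order.
Qed.

Lemma involutive_cosets_cycle_odd t :
    (0 < t)%N -> (t %| n)%N -> H :=: <[a ^+ t]> -> ~~ odd (n %/ t) ->
  involutive_cosets G H -> odd t.
Proof.
move=> t_gt0 tn HE even_d inv_cosets; apply: contraT => even_t.
have a_t2_sqr : (a ^+ t./2) ^+ 2 \in H by rewrite -expgM muln2 even_halfK // HE cycle_id.
have [y yG /andP[xyH /eqP y2]] := inv_cosets _ (groupX _ a_in_G) a_t2_sqr.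
have [k [yE | yE]] := dihedral_elem yG; rewrite {y yG}yE in xyH y2.
  rewrite -expgD HE mem_cycle_aX // in xyH.
  have t2n : (t * 2 %| n)%N by rewrite -(divnK tn) [(t * 2)%N]mulnC dvdn_pmul2r // dvdn2.
  have nk2 : (n %| k * 2)%N by rewrite -oa order_dvdn expgM y2.
  by rewrite (negbTE (half_add_not_dvdn t_gt0 even_t t2n nk2)) in xyH.
have : (a ^+ t./2 * a ^+ k)^-1 * (a ^+ t./2 * (a ^+ k * b)) \in <[a]>.
  apply: groupM; first by rewrite groupV groupM ?mem_cycle.
  by apply: (subsetP (cycleX a t)); rewrite -HE.
by rewrite [a ^+ _ * (_ * b)]mulgA mulKg (negbTE b_notin_cycle).
Qed.

Lemma sub_cycle_index :
    H \subset <[a]> -> (#|H| <= 2)%N \/ involutive_cosets G H ->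
  exists t, [/\ (0 < t)%N, (t %| n)%N, H :=: <[a ^+ t]> &
    odd (n %/ t) \/ (n %/ t = 2)%N \/ [/\ (4 <= n %/ t)%N, ~~ odd (n %/ t) & odd t]].
Proof.
move=> sHa crit; have [t [t_gt0 tn HE dE]] := sub_cycle_aX sHa.
exists t; split=> //; rewrite dE.
have [odd_H | even_H] := boolP (odd #|H|); [by left | right].
have [H2 | H_neq2] := eqVneq #|H| 2; [by left | right].
have H_gt3 : (3 < #|H|)%N by move: even_H H_neq2 (cardG_gt0 H); lia.
split=> //; apply: (involutive_cosets_cycle_odd t_gt0 tn HE); first by rewrite dE.
by case: crit => // H_le2; exfalso; lia.
Qed.

Lemma normal_refl_sqr j : a ^+ j * b \in H -> a ^+ 2 \in H.
Proof.
move=> hH; have nHa : a^-1 \in 'N(H) by rewrite groupV (subsetP (normal_norm nsHG)) ?a_in_G.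
have hcE : (a ^+ j * b) ^ a^-1 = a ^+ j.+2 * b.
  rewrite conjgE invgK -mulgA mulg_b_cycle ?groupV ?cycle_id // invgK.
  by rewrite !mulgA -expgS -expgSr.
have hcH : a ^+ j.+2 * b \in H by rewrite -hcE memJ_norm.
by have := groupM hcH hH; rewrite mul_refl ?mem_cycle // -addn2 addnC expgD mulgK.
Qed.

Lemma normal_refl_full j : a ^+ j * b \in H -> a \in H -> H :=: G.
Proof.
move=> hH aH; apply/eqP; rewrite eqEsubset normal_sub //= defG gen_subG.
have bH : b \in H by rewrite -(mulKg (a ^+ j) b) groupM ?groupV ?groupX.
by apply/subsetP => x; rewrite !inE => /orP[] /eqP ->.
Qed.

Lemma normal_refl_index2 j :
  a ^+ j * b \in H -> a \notin H -> H :=: <<[set a ^+ 2; a ^+ odd j * b]>>.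
Proof.
move=> hH aH; have a2H := normal_refl_sqr hH.
have HG := subsetP (normal_sub nsHG).
have even_rot m : a ^+ m \in H -> ~~ odd m.
  apply: contraL => odd_m; rewrite expg_double_half odd_m expg1.
  by apply: contra aH => /(groupM (groupVr (groupX m./2 a2H))); rewrite mulKg.
have baH : b * a ^+ j \in H.
  by rewrite -(memJ_norm _ (subsetP (normal_norm nsHG) b b_in_G)) conjgE invg_b !mulgA
       -[b * b]expg2 -ob expg_order mul1g.
have refl_parity m : a ^+ m * b \in H -> odd m = odd j.
  move=> rH; have := groupM rH baH.
  rewrite -mulgA (mulgA b) -expg2 -ob expg_order mul1g -expgD => /even_rot.
  by rewrite oddD negb_add => /eqP.
have gen_a2 m : (a ^+ 2) ^+ m \in <<[set a ^+ 2; a ^+ odd j * b]>>.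
  by rewrite groupX // mem_gen // !inE eqxx.
have gen_refl : a ^+ odd j * b \in <<[set a ^+ 2; a ^+ odd j * b]>>.
  by rewrite mem_gen // !inE eqxx orbT.
apply/eqP; rewrite eqEsubset; apply/andP; split; last first.
  rewrite gen_subG; apply/subsetP => x; rewrite !inE => /orP[] /eqP -> //.
  have := groupM (groupVr (groupX j./2 a2H)) hH.
  by rewrite (expg_double_half a j) -mulgA mulKg.
apply/subsetP => g gH; have [m [gE | gE]] := dihedral_elem (HG g gH); rewrite gE in gH *.
  by rewrite (expg_double_half a m) (negbTE (even_rot m gH)) mulg1.
by rewrite (expg_double_half a m) (refl_parity m gH) -mulgA groupM.
Qed.

Lemma normal_not_sub_cycle :
  ~~ (H \subset <[a]>) ->
  H :=: G \/ ~~ odd n /\ (H :=: <<[set a ^+ 2; b]>> \/ H :=: <<[set a ^+ 2; a * b]>>).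
Proof.
case/subsetPn => h hH h_notin; have HG := subsetP (normal_sub nsHG).
have [j [hE | hE]] := dihedral_elem (HG h hH); first by rewrite hE mem_cycle in h_notin.
rewrite {h h_notin}hE in hH.
have [aH | aH] := boolP (a \in H); first by left; apply: normal_refl_full hH aH.
right; split.
  apply: contra aH => odd_n; apply: subsetP (mem_cycle_sqr _); last by rewrite oa.
  by rewrite cycle_subG (normal_refl_sqr hH).
have := normal_refl_index2 hH aH.
by case: (odd j) => ->; [right; rewrite expg1 | left; rewrite mul1g].
Qed.

End Dihedral.

Theorem theorem3p13 (gT : finGroupType) (G H : {group gT}) (a b : gT) (n : nat) :
  (3 <= n)%N ->
  G :=: <<[set a; b]>> -> #[a] = n -> #[b] = 2%N -> b * a * b = a^-1 ->
  #|G| = (2 * n)%N ->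
  H <| G ->
  (exists C : {set gT}, perfect_code G H C) <->
  (H :=: G \/
   (odd n /\ H \subset <[a]>) \/
   (~~ odd n /\
    (H :=: <<[set a ^+ 2; b]>> \/ H :=: <<[set a ^+ 2; a * b]>> \/
     exists t : nat, [/\ (0 < t)%N, (t %| n)%N, H :=: <[a ^+ t]> &
       (odd (n %/ t) \/ (n %/ t = 2)%N \/
        [/\ (4 <= n %/ t)%N, ~~ odd (n %/ t) & odd t])]))).
Proof.
move=> n_ge3 defG oa ob bab cardG nsHG.
have refl_ok := involutive_cosets_refl n_ge3 defG oa ob bab cardG nsHG.
rewrite (perfect_code_normalP nsHG); split=> [crit | ].
  have [sHa | ] := boolP (H \subset <[a]>).
    have [odd_n | even_n] := boolP (odd n); first by right; left.
    right; right; split=> //; right; right.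
    exact: (sub_cycle_index n_ge3 defG oa ob cardG nsHG).
  case/(normal_not_sub_cycle n_ge3 defG oa ob bab cardG nsHG) => [HG | [even_n HE]]; first by left.
  by right; right; split=> //; case: HE => HE; [left | right; left].
case=> [HG | [[odd_n _] | [even_n [HE | [HE | [t [t_gt0 tn HE dt_ok]]]]]]].
- by right; apply: (refl_ok 0); rewrite mul1g HG (b_in_G defG).
- by right; apply: (involutive_cosets_odd n_ge3 defG oa ob bab cardG).
- by right; apply: (refl_ok 0); rewrite mul1g HE mem_gen // !inE eqxx orbT.
- by right; apply: (refl_ok 1%N); rewrite expg1 HE mem_gen // !inE eqxx orbT.
have cycle_ok := involutive_cosets_cycle n_ge3 defG oa ob bab cardG even_n tn HE.
case: dt_ok => [odd_d | [d2 | [_ _ odd_t]]].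
- by right; apply: cycle_ok; left.
- by left; rewrite HE (card_cycle_aX oa tn) d2.
- by right; apply: cycle_ok; right.
Qed.
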